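(* Let $p \ge 2$ and $K \ge 0$ be coprime integers, and let $L, R$ be integers with $0 \le L \le R < p$. Define $G(p,K,L,R)$ recursively by taking the first of the following cases (checked in the order listed) whose condition holds: (a) if $K = 0$ or $L = 0$: $G(p,K,L,R) = 0$; (b) if $K \ge p$: $G(p,K,L,R) = G(p, K \bmod p, L, R)$; (c) if $\lceil L/K \rceil \le \lfloor R/K \rfloor$: $G(p,K,L,R) = \lceil L/K \rceil$; (d) if $2K \ge p$: $G(p,K,L,R) = G(p, p-K, p-R, p-L)$; (e) otherwise: $G(p,K,L,R) = \left\lceil \dfrac{L + p \cdot G\big(K,\ (-p) \bmod K,\ L \bmod K,\ R \bmod K\big)}{K} \right\rceil$. Then the recursion terminates after $O(\log p)$ recursive calls, and $G(p,K,L,R)$ is the smallest nonnegative integer $m$ such that $L \le (mK \bmod p) \le R$.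
   Context: For integers $a$ and $n \ge 1$, $a \bmod n$ denotes the unique representative of $a$ modulo $n$ in $\{0,1,\dots,n-1\}$. The condition ''$L \le mK \le R \bmod p$'' means that the least nonnegative residue of $mK$ modulo $p$ lies in the interval $[L,R]$. Since $\gcd(p,K)=1$, such an $m$ exists (e.g. $m \equiv L K^{-1} \pmod p$). *)

From mathcomp Require Import all_boot.
Set Implicit Arguments. Unset Strict Implicit. Unset Printing Implicit Defensive.

Definition ceil_div (a d : nat) : nat := (a + d - 1) %/ d.

(* (-p) mod K, least nonnegative residue *)
Definition negmod (p K : nat) : nat := (K - p %% K) %% K.

Fixpoint Gf (fuel p K L R : nat) {struct fuel} : option nat :=
  match fuel with
  | 0 => None
  | n.+1 =>
    if (K == 0) || (L == 0) then Some 0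
    else if p <= K then Gf n p (K %% p) L R
    else if ceil_div L K <= R %/ K then Some (ceil_div L K)
    else if p <= K.*2 then Gf n p (p - K) (p - R) (p - L)
    else match Gf n K (negmod p K) (L %% K) (R %% K) with
         | Some g => Some (ceil_div (L + p * g) K)
         | None => None
         end
  end.

From mathcomp Require Import all_boot zify.

(* A hit [m] with [L <= mK mod p <= R] is the same as a pair [(m, j)] with
   [L + jp <= mK <= R + jp].  Case (d) rests on [m(p - K) = -mK (mod p)], which
   maps the window [[L, R]] onto [[p - R, p - L]].  In case (e) no multiple of
   [K] lies in [[L, R]], so the first hit comes from the least [j] whose window
   [[L + jp, R + jp]] contains a multiple of [K]; modulo [K] this is the
   first-hit problem for modulus [K], multiplier [-p mod K] and window
   [[L mod K, R mod K]], and the answer is then the least multiple of [K] above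
   [L + jp].  Case (e) is reached only when [2K < p] and case (d) produces
   [2K <= p], so the modulus halves at least every two calls. *)

Set Implicit Arguments.
Unset Strict Implicit.

Lemma leq_ceil_div a K m : 0 < K -> (ceil_div a K <= m) = (a <= m * K).
Proof. by move=> K_gt0; rewrite /ceil_div -ltnS ltn_divLR //; apply/idP/idP; lia. Qed.

Lemma coprime_modn_gt0 p K : 1 < p -> coprime p K -> 0 < K %% p.
Proof.
move=> p_gt1; rewrite -coprime_modr lt0n; apply: contraTneq => ->.
by rewrite /coprime gcdn0 gtn_eqF.
Qed.

Lemma coprime_subr p K : K <= p -> coprime p (p - K) = coprime p K.
Proof.
move=> Kp; have gcdKE : gcdn p K = gcdn (p - K) K.
  by rewrite -{1}(subnK Kp) gcdnC gcdnDr gcdnC.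
by rewrite /coprime gcdKE gcdnC -{2}(subnK Kp) gcdnDl.
Qed.

Lemma coprime_negmod p K : 0 < K -> coprime p K -> coprime K (negmod p K).
Proof.
move=> K_gt0 coKp.
rewrite /negmod coprime_modr coprime_subr ?coprime_modr 1?coprime_sym //.
exact: ltnW (ltn_pmod _ K_gt0).
Qed.

Lemma divn_eq_no_multiple L R K : 0 < K -> L <= R -> R %/ K < ceil_div L K ->
  L %/ K = R %/ K.
Proof.
move=> K_gt0 LR; have := leq_div2r K LR.
have : ceil_div L K <= (L %/ K).+1.
  by rewrite leq_ceil_div //; have := divn_eq L K; have := ltn_pmod L K_gt0; lia.
lia.
Qed.

Lemma trunc_log2_lt K p : 0 < K -> K.*2 <= p -> trunc_log 2 K < trunc_log 2 p.
Proof. by move=> K_gt0 Kp; rewrite -trunc_log2_double // leq_trunc_log. Qed.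

Definition hit p K L R m := L <= (m * K) %% p <= R.

Definition first_hit p K L R m :=
  hit p K L R m /\ forall m', hit p K L R m' -> m <= m'.

Lemma eq_first_hit p K L R p' K' L' R' m :
  (forall m, hit p K L R m <-> hit p' K' L' R' m) ->
  first_hit p K L R m -> first_hit p' K' L' R' m.
Proof. by move=> eqh [/eqh hm least_m]; split=> // m' /eqh; apply: least_m. Qed.

Lemma first_hit0 p K R : first_hit p K 0 R 0.
Proof. by split=> //; rewrite /hit mul0n mod0n. Qed.

Lemma hit_modl p K L R m : hit p (K %% p) L R m <-> hit p K L R m.
Proof. by rewrite /hit modnMmr. Qed.

Lemma hitE p K L R m : R < p ->
  hit p K L R m <-> exists j, L + j * p <= m * K <= R + j * p.
Proof.
move=> Rp; have p_gt0 : 0 < p by lia.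
split=> [hm | [j /andP [Lj jR]]].
  exists ((m * K) %/ p); move: hm; rewrite /hit.
  have := divn_eq (m * K) p; have := ltn_pmod (m * K) p_gt0; lia.
by rewrite /hit (_ : m * K = j * p + (m * K - j * p)) ?modnMDl ?modn_small; lia.
Qed.

Lemma first_hit_ceil p K L R : 0 < K -> R < p -> ceil_div L K <= R %/ K ->
  first_hit p K L R (ceil_div L K).
Proof.
move=> K_gt0 Rp; rewrite leq_divRL // => cR.
have Lc : L <= ceil_div L K * K by rewrite -leq_ceil_div.
split=> [|m hm]; first by rewrite /hit modn_small ?Lc ?cR //; lia.
rewrite leq_ceil_div //; apply: contraTT hm; rewrite -ltnNge => mL.
have mc : m * K < ceil_div L K * K by lia.
by rewrite /hit modn_small ?(leqNgt L) ?mL //; lia.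
Qed.

Lemma modn_mul_subr p K m : 0 < p -> K <= p -> 0 < (m * K) %% p ->
  (m * (p - K)) %% p = p - (m * K) %% p.
Proof.
move=> p_gt0 Kp mK_gt0.
by rewrite mulnBr modnB // ?leq_mul2l ?Kp ?orbT // modnMl mK_gt0 mul1n addn0.
Qed.

Lemma hit_reflect p K L R m : 0 < L -> R < p -> K <= p ->
  hit p K L R m -> hit p (p - K) (p - R) (p - L) m.
Proof.
move=> L_gt0 Rp Kp /andP [Lm mR].
by rewrite /hit modn_mul_subr //; lia.
Qed.

Lemma hit_reflectE p K L R m : 0 < L <= R -> R < p -> K <= p ->
  hit p K L R m <-> hit p (p - K) (p - R) (p - L) m.
Proof.
move=> /andP [L_gt0 LR] Rp Kp; split; first exact: hit_reflect.
by move=> /hit_reflect; rewrite !subKn; try lia; apply; lia.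
Qed.

Lemma modn_negmod p K j : 0 < K -> (j * negmod p K + j * p) %% K = 0.
Proof.
move=> K_gt0; rewrite -mulnDr -modnMmr /negmod modnDml -modnDmr subnK.
  by rewrite modnn muln0 mod0n.
exact: ltnW (ltn_pmod _ K_gt0).
Qed.

(* [(j * negmod p K) mod K] is the distance from [jp] up to the next multiple of [K]. *)
Lemma hit_negmodE p K L R j : 0 < K -> L %/ K = R %/ K ->
  hit K (negmod p K) (L %% K) (R %% K) j <->
  exists m, L + j * p <= m * K <= R + j * p.
Proof.
move=> K_gt0 LRq; rewrite /hit; set x := (j * negmod p K) %% K.
have x_lt : x < K by rewrite ltn_pmod.
have x0 : (x + j * p) %% K = 0 by rewrite modnDml modn_negmod.
have EL := divn_eq L K; have ER := divn_eq R K; rewrite LRq in EL.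
have := ltn_pmod L K_gt0; have := ltn_pmod R K_gt0.
split=> [lxr | [m /andP [Lm mR]]].
  exists ((x + j * p) %/ K + R %/ K).
  have := divn_eq (x + j * p) K; rewrite x0; lia.
set y := m * K - R %/ K * K - j * p.
have yx : y %% K = x %% K.
  apply/eqP; rewrite -(eqn_modDr (j * p)) x0.
  by rewrite (_ : y + j * p = (m - R %/ K) * K) ?modnMl //; rewrite mulnBl; lia.
by move: yx; rewrite (modn_small x_lt) modn_small; lia.
Qed.

Lemma first_hit_lift p K L R g : 0 < K -> R < p -> L %/ K = R %/ K ->
  first_hit K (negmod p K) (L %% K) (R %% K) g ->
  first_hit p K L R (ceil_div (L + p * g) K).
Proof.
move=> K_gt0 Rp LRq [hit_g least_g].
have ceilE m : (ceil_div (L + p * g) K <= m) = (L + g * p <= m * K).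
  by rewrite leq_ceil_div // mulnC.
split=> [|m' /hitE [//|j /andP [Lj jR]]].
  apply/hitE => //; exists g.
  have [m /andP [Lm mR]] := (hit_negmodE p g K_gt0 LRq).1 hit_g.
  have : ceil_div (L + p * g) K * K <= m * K by rewrite leq_pmul2r // ceilE.
  by have := ceilE (ceil_div (L + p * g) K); rewrite leqnn; lia.
have g_le_j : g <= j by apply/least_g/(hit_negmodE p j K_gt0 LRq); exists m'; lia.
by rewrite ceilE; have := leq_mul g_le_j (leqnn p); lia.
Qed.

Lemma Gf_reduce_modl n p K L R : p <= K ->
  Gf n.+2 p K L R = Gf n.+1 p (K %% p) L R.
Proof.
move=> pK; rewrite [LHS]/= pK.
case: eqP => [K0 | _] /=; last by case: eqP => [-> | _]; rewrite ?orbT.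
by move: pK; rewrite K0 leqn0 => /eqP ->; rewrite modn0.
Qed.

Lemma Gf_settled n p K L R : 0 < K < p -> R < p ->
  (L == 0) || (ceil_div L K <= R %/ K) ->
  exists2 m, Gf n.+1 p K L R = Some m & first_hit p K L R m.
Proof.
move=> /andP [K_gt0 Kp] Rp settled.
have [-> | L_gt0] := posnP L; first by exists 0; [rewrite /= orbT | apply: first_hit0].
rewrite eqn0Ngt L_gt0 /= in settled.
exists (ceil_div L K); last exact: first_hit_ceil.
by rewrite /= !gtn_eqF // leqNgt Kp settled.
Qed.

Lemma Gf_unsettled n p K L R : 0 < K < p -> 0 < L -> R %/ K < ceil_div L K ->
  Gf n.+1 p K L R =
    if p <= K.*2 then Gf n p (p - K) (p - R) (p - L)
    else omap (fun g => ceil_div (L + p * g) K) (Gf n K (negmod p K) (L %% K) (R %% K)).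
Proof.
move=> /andP [K_gt0 Kp] L_gt0 Rc.
by rewrite /= !gtn_eqF // leqNgt Kp leqNgt Rc; case: (Gf _ _ _ _ _).
Qed.

Definition Gf_solves p := forall n K L R,
  0 < K < p -> coprime p K -> L <= R < p -> (trunc_log 2 p).*2.+2 <= n ->
  exists2 m, Gf n p K L R = Some m & first_hit p K L R m.

Section Fuel.

Variable p : nat.
Hypothesis IHp : forall p', p' < p -> Gf_solves p'.

Lemma Gf_solves_half n K L R :
  0 < K -> K.*2 <= p -> coprime p K -> L <= R < p -> (trunc_log 2 p).*2.+1 <= n ->
  exists2 m, Gf n p K L R = Some m & first_hit p K L R m.
Proof.
move=> K_gt0 Kp coKp /andP [LR Rp]; case: n => [|n] fuel; first lia.
have [settled | /norP [L_neq0 unsettled]] := boolP ((L == 0) || (ceil_div L K <= R %/ K)).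
  by apply: Gf_settled; rewrite ?K_gt0 //; lia.
rewrite -lt0n in L_neq0; rewrite -ltnNge in unsettled.
have K_gt1 : 1 < K.
  rewrite ltnNge; apply: contraTN unsettled => K_le1.
  by rewrite (_ : K = 1) ?divn1 /ceil_div ?addnK ?divn1 -?leqNgt //; lia.
have K2p : K.*2 < p.
  rewrite ltn_neqAle Kp andbT; apply/eqP => pE.
  have coKp' : coprime K p by rewrite coprime_sym.
  by have := coprime_modn_gt0 K_gt1 coKp'; rewrite -pE -muln2 modnMr.
have K_lt_p : K < p by lia.
rewrite Gf_unsettled ?K_gt0 ?K_lt_p // ifN -?ltnNge //=.
have LRq := divn_eq_no_multiple K_gt0 LR unsettled.
have coKn := coprime_negmod K_gt0 coKp.
have [g -> first_g] : exists2 g, Gf n K (negmod p K) (L %% K) (R %% K) = Some g &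
    first_hit K (negmod p K) (L %% K) (R %% K) g.
  apply: IHp => //.
  - by have := coprime_modn_gt0 K_gt1 coKn; rewrite /negmod modn_mod ltn_pmod // => ->.
  - by rewrite ltn_pmod // andbT; have := divn_eq L K; have := divn_eq R K; lia.
  - by have := trunc_log2_lt K_gt0 (ltnW K2p); lia.
by eexists; [reflexivity | exact: first_hit_lift].
Qed.

Lemma Gf_solves_lt : Gf_solves p.
Proof.
move=> n K L R /andP [K_gt0 Kp] coKp /andP [LR Rp] fuel.
have [Kp2 | pK2] := leqP K.*2 p; first by apply: Gf_solves_half => //; [rewrite LR | lia].
case: n fuel => [|n] fuel; first lia.
have [settled | /norP [L_neq0 unsettled]] := boolP ((L == 0) || (ceil_div L K <= R %/ K)).
  by apply: Gf_settled; rewrite ?K_gt0.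
rewrite -lt0n in L_neq0; rewrite -ltnNge in unsettled.
rewrite Gf_unsettled ?K_gt0 ?(ltnW pK2) //.
have [m Gm first_m] : exists2 m, Gf n p (p - K) (p - R) (p - L) = Some m &
    first_hit p (p - K) (p - R) (p - L) m.
  apply: Gf_solves_half; rewrite ?coprime_subr ?(ltnW Kp) //; lia.
exists m => //; apply: eq_first_hit first_m => m'.
by apply: iff_sym; apply: hit_reflectE; rewrite ?L_neq0 ?(ltnW Kp).
Qed.

End Fuel.

Lemma Gf_solves_all p : Gf_solves p.
Proof. by elim/ltn_ind: p => p IHp; apply: Gf_solves_lt. Qed.

Theorem mainTheorem1 :
  exists c : nat, forall p K L R : nat,
    2 <= p -> coprime p K -> L <= R -> R < p ->
    exists m : nat,
      Gf (c * (trunc_log 2 p).+1) p K L R = Some m /\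
      L <= (m * K) %% p <= R /\
      (forall m' : nat, L <= (m' * K) %% p <= R -> m <= m').
Proof.
exists 3 => p K L R p_gt1 coKp LR Rp.
suff [m Gm [hit_m least_m]] : exists2 m, Gf (3 * (trunc_log 2 p).+1) p K L R = Some m &
    first_hit p K L R m by exists m.
have Kp_gt0 := coprime_modn_gt0 p_gt1 coKp.
have LRp : L <= R < p by rewrite LR.
have [Kp | pK] := ltnP K p.
  apply: Gf_solves_all => //; last by lia.
  by rewrite Kp andbT -(modn_small Kp).
rewrite (_ : 3 * _ = (3 * trunc_log 2 p + 1).+2); last by lia.
rewrite Gf_reduce_modl //.
have [m Gm first_m] : exists2 m, Gf (3 * trunc_log 2 p + 1).+1 p (K %% p) L R = Some m &
    first_hit p (K %% p) L R m.
  by apply: Gf_solves_all; rewrite ?Kp_gt0 ?ltn_pmod ?coprime_modr //; lia.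
by exists m => //; apply: eq_first_hit first_m => m'; apply: hit_modl.
Qed.
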